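(* Let $\mathcal C,\mathcal D$ be 2-categories. Let $L:\mathcal C\boxtimes_{\mathrm{sim}}\mathcal D\to\mathcal C\times\mathcal D$ be the strict 2-functor with $L(C;D)=(C,D)$, $L(n,p,r;m,q,s)=(\circ p,\circ q)$ (the composites $(p)_n\circ\dots\circ(p)_1$ and $(q)_m\circ\dots\circ(q)_1$), and $L(\xi,\alpha;\rho,\beta)=(\alpha_{\bar n}\circ\dots\circ\alpha_1,\ \beta_{\bar m}\circ\dots\circ\beta_1)$. Let $R:\mathcal C\times\mathcal D\to\mathcal C\boxtimes_{\mathrm{sim}}\mathcal D$ be the lax functor with $R(C,D)=(C;D)$, $R(c,d)=$ the 1-cell ''first $d$, then $c$'', i.e. $(1,(c),r_0;1,(d),s_0)$ with $r_0=(0,0,1)$, $s_0=(0,1,1)$ as maps $[2]\to[1]$, $R(\gamma,\delta)=(\mathrm{id}_{[1]},(\gamma);\mathrm{id}_{[1]},(\delta))$, unit comparison at $(C,D)$ the unique 2-cell from the identity to $R(1_C,1_D)$ with identity icon components, and composition comparison $R(c',d')\circ R(c,d)\Rightarrow R(c'\circ c,d'\circ d)$ the 2-cell $(\partial,(1_{c'\circ c});\partial,(1_{d'\circ d}))$ with $\partial:[1]\to[2]$, $0\mapsto0$, $1\mapsto2$. Then $L\circ R=1_{\mathcal C\times\mathcal D}$, and the family of 2-cells $\eta_{(n,p,r;m,q,s)}=(!_{[1]\to[n]},(1_{\circ p});!_{[1]\to[m]},(1_{\circ q})):(n,p,r;m,q,s)\Rightarrow R L(n,p,r;m,q,s)$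 (where $!_{[1]\to[k]}$ sends $0\mapsto0$, $1\mapsto k$) is an icon $\eta:1\Rightarrow R\circ L$ exhibiting $L\dashv R$ (with identity counit) in the 2-category of 2-categories, lax functors and icons.
   Context: All 2-categories are strict and small. An icon between lax functors $F,G:\mathcal X\to\mathcal Y$ that agree on objects is a family of 2-cells $\theta_x:Fx\Rightarrow Gx$, one for each 1-cell $x$, natural in 2-cells of $\mathcal X$ and compatible with the unit and composition comparisons; 2-categories, lax functors and icons form a 2-category. $[n]=\{0<\dots<n\}$ as a category; $\Delta_{\bot\top}$ has objects $[n]$ and morphisms order-preserving maps preserving first and last element. A path of length $n$ in $\mathcal C$ is a 2-functor $p:[n]\to\mathcal C$, with components $(p)_i=p(i-1\to i)$. For $\xi:[\bar n]\to[n]$ in $\Delta_{\bot\top}$, an icon $\alpha:p\circ\xi\Rightarrow\bar p$ is a family of 2-cells $\alpha_i:(p)_{\xi(i)}\circ\dots\circ(p)_{\xi(i-1)+1}\Rightarrow(\bar p)_i$, $i=1..\bar n$ (source an identity if $\xi(i-1)=\xi(i)$). A shuffle of $n,m$ is a pair $r:[n+m]\to[n]$, $s:[n+m]\to[m]$ in $\Delta_{\bot\top}$ such that at each step exactly one of $r,s$ increases by $1$ and the other stays constant. $\mathcal C\boxtimes_{\mathrm{sim}}\mathcal D$: objects pairs $(C;D)$; 1-cells sextuples $(n,p,r;m,q,s)$ with $p$ a path of length $n$ in $\mathcal C$, $q$ a path of length $m$ in $\mathcal D$, $(r,s)$ a shuffle, composed by concatenation (identity: $(0,C,\mathrm{id};0,D,\mathrm{id})$);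 2-cells $(n,p,r;m,q,s)\Rightarrow(\bar n,\bar p,\bar r;\bar m,\bar q,\bar s)$ are $(\xi,\alpha;\rho,\beta)$ with $\xi:[\bar n]\to[n]$, $\rho:[\bar m]\to[m]$ in $\Delta_{\bot\top}$ satisfying $\min r^{-1}(\xi(\bar r(\bar i)))\le\max s^{-1}(\rho(\bar s(\bar i)))$ for all $\bar i\in\{0,\dots,\bar n+\bar m\}$, and icons $\alpha:p\circ\xi\Rightarrow\bar p$, $\beta:q\circ\rho\Rightarrow\bar q$; vertical composite of $(\xi,\alpha;\rho,\beta)$ then $(\bar\xi,\bar\alpha;\bar\rho,\bar\beta)$ is $(\xi\circ\bar\xi,\bar\alpha\bullet(\alpha\bar\xi);\rho\circ\bar\rho,\bar\beta\bullet(\beta\bar\rho))$ with $(\alpha\bar\xi)_i=\alpha_{\bar\xi(i)}\circ\dots\circ\alpha_{\bar\xi(i-1)+1}$; horizontal composition is concatenation. *)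

From mathcomp Require Import all_boot.
Set Implicit Arguments. Unset Strict Implicit. Unset Printing Implicit Defensive.

(* Strict (small) 2-categories, in "total" (multi-sorted algebraic) form:   *)
(* a type of objects, a type Mor of candidate 1-cells carved out by okM, a  *)
(* type Cel of candidate 2-cells carved out by okC, with source/target maps  *)
(* and composition operations (g ∘ f is [comp1 g f], β • α is [vcomp β α],  *)
(* β ∘ α is [hcomp β α]); laws are required only on well-formed, composable *)
(* arguments.                                                                *)
Record cat2 := Cat2 {
  Ob : Type; Mor : Type; Cel : Type;
  okM : Mor -> Prop; okC : Cel -> Prop;
  src : Mor -> Ob; tgt : Mor -> Ob;
  dom : Cel -> Mor; cod : Cel -> Mor;
  id1 : Ob -> Mor; comp1 : Mor -> Mor -> Mor;
  id2 : Mor -> Cel; vcomp : Cel -> Cel -> Cel; hcomp : Cel -> Cel -> Cel }.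

Record is_2cat (X : cat2) : Prop := Is2cat {
  c_id1 : forall x : Ob X, [/\ okM (id1 x), src (id1 x) = x & tgt (id1 x) = x];
  c_comp1 : forall f g : Mor X, okM f -> okM g -> tgt f = src g ->
    [/\ okM (comp1 g f), src (comp1 g f) = src f & tgt (comp1 g f) = tgt g];
  c_idl : forall f : Mor X, okM f -> comp1 (id1 (tgt f)) f = f;
  c_idr : forall f : Mor X, okM f -> comp1 f (id1 (src f)) = f;
  c_assoc : forall f g h : Mor X, okM f -> okM g -> okM h ->
    tgt f = src g -> tgt g = src h ->
    comp1 h (comp1 g f) = comp1 (comp1 h g) f;
  c_cell : forall a : Cel X, okC a ->
    [/\ okM (dom a), okM (cod a), src (dom a) = src (cod a)
      & tgt (dom a) = tgt (cod a)];
  c_id2 : forall f : Mor X, okM f -> [/\ okC (id2 f), dom (id2 f) = f & cod (id2 f) = f];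
  c_vcomp : forall a b : Cel X, okC a -> okC b -> cod a = dom b ->
    [/\ okC (vcomp b a), dom (vcomp b a) = dom a & cod (vcomp b a) = cod b];
  c_vidl : forall a : Cel X, okC a -> vcomp (id2 (cod a)) a = a;
  c_vidr : forall a : Cel X, okC a -> vcomp a (id2 (dom a)) = a;
  c_vassoc : forall a b c : Cel X, okC a -> okC b -> okC c ->
    cod a = dom b -> cod b = dom c -> vcomp c (vcomp b a) = vcomp (vcomp c b) a;
  c_hcomp : forall a b : Cel X, okC a -> okC b -> tgt (dom a) = src (dom b) ->
    [/\ okC (hcomp b a), dom (hcomp b a) = comp1 (dom b) (dom a)
      & cod (hcomp b a) = comp1 (cod b) (cod a)];
  c_hidl : forall a : Cel X, okC a -> hcomp (id2 (id1 (tgt (dom a)))) a = a;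
  c_hidr : forall a : Cel X, okC a -> hcomp a (id2 (id1 (src (dom a)))) = a;
  c_hassoc : forall a b c : Cel X, okC a -> okC b -> okC c ->
    tgt (dom a) = src (dom b) -> tgt (dom b) = src (dom c) ->
    hcomp c (hcomp b a) = hcomp (hcomp c b) a;
  c_hid2 : forall f g : Mor X, okM f -> okM g -> tgt f = src g ->
    hcomp (id2 g) (id2 f) = id2 (comp1 g f);
  c_interchange : forall a a' b b' : Cel X, okC a -> okC a' -> okC b -> okC b' ->
    cod a = dom a' -> cod b = dom b' -> tgt (dom a) = src (dom b) ->
    hcomp (vcomp b' b) (vcomp a' a) = vcomp (hcomp b' a') (hcomp b a) }.

Definition prod2 (C D : cat2) : cat2 :=
  @Cat2 (Ob C * Ob D)%type (Mor C * Mor D)%type (Cel C * Cel D)%type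
    (fun f => okM f.1 /\ okM f.2) (fun a => okC a.1 /\ okC a.2)
    (fun f => (src f.1, src f.2)) (fun f => (tgt f.1, tgt f.2))
    (fun a => (dom a.1, dom a.2)) (fun a => (cod a.1, cod a.2))
    (fun x => (id1 x.1, id1 x.2)) (fun g f => (comp1 g.1 f.1, comp1 g.2 f.2))
    (fun f => (id2 f.1, id2 f.2)) (fun b a => (vcomp b.1 a.1, vcomp b.2 a.2))
    (fun b a => (hcomp b.1 a.1, hcomp b.2 a.2)).

(* A path (2-functor [n] -> X) is given by its starting object p(0) and the  *)
(* list of its components (p)_1, ..., (p)_n.                                 *)
Record path (X : cat2) := Path { pstart : Ob X; parr : seq (Mor X) }.

Fixpoint chain (X : cat2) (x : Ob X) (l : seq (Mor X)) : Prop :=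
  if l is f :: l' then [/\ okM f, src f = x & chain (tgt f) l'] else True.

Definition path_ok (X : cat2) (p : path X) (n : nat) : Prop :=
  size (parr p) = n /\ chain (pstart p) (parr p).

Definition pobj (X : cat2) (p : path X) (k : nat) : Ob X :=
  foldl (fun _ f => tgt f) (pstart p) (take k (parr p)).

Definition mlist (X : cat2) (x : Ob X) (l : seq (Mor X)) : Mor X :=
  if l is f :: l' then foldl (fun acc g => comp1 g acc) f l' else id1 x.

Definition hlist (X : cat2) (x : Ob X) (l : seq (Cel X)) : Cel X :=
  if l is a :: l' then foldl (fun acc b => hcomp b acc) a l' else id2 (id1 x).

(* entries a+1 .. b (1-indexed) of l *)
Definition slice (T : Type) (l : seq T) (a b : nat) : seq T := take (b - a) (drop a l).

(* (p)_b ∘ ... ∘ (p)_(a+1), an identity 1_{p(a)} if a = b *)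
Definition seg (X : cat2) (p : path X) (a b : nat) : Mor X :=
  mlist (pobj p a) (slice (parr p) a b).

(* f : [a] -> [b] in Δ_{⊥⊤}, represented by its list of values f(0..a) *)
Definition dmap (f : seq nat) (a b : nat) : Prop :=
  [/\ size f = a.+1, nth 0 f 0 = 0, nth 0 f a = b
    & forall i, i < a -> nth 0 f i <= nth 0 f i.+1].

Definition shuffle (r s : seq nat) (n m : nat) : Prop :=
  [/\ dmap r (n + m) n, dmap s (n + m) m
    & forall i, i < n + m ->
        (nth 0 r i.+1 = (nth 0 r i).+1 /\ nth 0 s i.+1 = nth 0 s i) \/
        (nth 0 r i.+1 = nth 0 r i /\ nth 0 s i.+1 = (nth 0 s i).+1)].

(* min f^{-1}(k) and max f^{-1}(k) for f given by its list of values *)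
Definition minpre (f : seq nat) (k : nat) : nat := find (pred1 k) f.
Definition maxpre (f : seq nat) (k : nat) : nat := (size f).-1 - find (pred1 k) (rev f).

(* icon al : p ∘ xi => pb, where pb has length nb *)
Definition icon_ok (X : cat2) (p : path X) (xi : seq nat) (pb : path X) (nb : nat)
    (al : seq (Cel X)) : Prop :=
  size al = nb /\
  forall i (a : Cel X) (f : Mor X), onth al i = Some a -> onth (parr pb) i = Some f ->
    [/\ okC a, dom a = seg p (nth 0 xi i) (nth 0 xi i.+1) & cod a = f].

Record bmor (C D : cat2) := BMor {
  bn : nat; bp : path C; br : seq nat; bm : nat; bq : path D; bs : seq nat }.

Record bcel (C D : cat2) := BCel {
  bdom : bmor C D; bcod : bmor C D;
  bxi : seq nat; bal : seq (Cel C); brho : seq nat; bbe : seq (Cel D) }.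

Section Box.
Variables C D : cat2.

Definition bsrc (f : bmor C D) : Ob C * Ob D := (pstart (bp f), pstart (bq f)).
Definition btgt (f : bmor C D) : Ob C * Ob D := (pobj (bp f) (bn f), pobj (bq f) (bm f)).

Definition bokM (f : bmor C D) : Prop :=
  [/\ path_ok (bp f) (bn f), path_ok (bq f) (bm f) & shuffle (br f) (bs f) (bn f) (bm f)].

Definition bokC (a : bcel C D) : Prop :=
  let f := bdom a in let g := bcod a in
  bokM f /\ bokM g /\ bsrc f = bsrc g /\ btgt f = btgt g /\
  dmap (bxi a) (bn g) (bn f) /\ dmap (brho a) (bm g) (bm f) /\
  (forall i, i <= bn g + bm g ->
     minpre (br f) (nth 0 (bxi a) (nth 0 (br g) i))
     <= maxpre (bs f) (nth 0 (brho a) (nth 0 (bs g) i))) /\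
  icon_ok (bp f) (bxi a) (bp g) (bn g) (bal a) /\
  icon_ok (bq f) (brho a) (bq g) (bm g) (bbe a).

Definition bid1 (x : Ob C * Ob D) : bmor C D :=
  BMor 0 (Path x.1 [::]) [:: 0] 0 (Path x.2 [::]) [:: 0].

Definition bcomp1 (g f : bmor C D) : bmor C D :=
  BMor (bn f + bn g) (Path (pstart (bp f)) (parr (bp f) ++ parr (bp g)))
       (br f ++ map (addn (bn f)) (behead (br g)))
       (bm f + bm g) (Path (pstart (bq f)) (parr (bq f) ++ parr (bq g)))
       (bs f ++ map (addn (bm f)) (behead (bs g))).

Definition bid2 (f : bmor C D) : bcel C D :=
  BCel f f (iota 0 (bn f).+1) (map (@id2 C) (parr (bp f)))
           (iota 0 (bm f).+1) (map (@id2 D) (parr (bq f))).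

(* components of  alb • (al xib)  for the vertical composite *)
Definition vcomp_icon (X : cat2) (al : seq (Cel X)) (p : path X) (xib : seq nat)
    (alb : seq (Cel X)) : seq (Cel X) :=
  [seq vcomp c.1 (hlist (pobj p (nth 0 xib c.2))
                        (slice al (nth 0 xib c.2) (nth 0 xib c.2.+1)))
  | c <- zip alb (iota 0 (size alb))].

Definition bvcomp (b a : bcel C D) : bcel C D :=
  BCel (bdom a) (bcod b)
    (map (nth 0 (bxi a)) (bxi b)) (vcomp_icon (bal a) (bp (bcod a)) (bxi b) (bal b))
    (map (nth 0 (brho a)) (brho b)) (vcomp_icon (bbe a) (bq (bcod a)) (brho b) (bbe b)).

Definition bhcomp (b a : bcel C D) : bcel C D :=
  BCel (bcomp1 (bdom b) (bdom a)) (bcomp1 (bcod b) (bcod a))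
    (bxi a ++ map (addn (bn (bdom a))) (behead (bxi b))) (bal a ++ bal b)
    (brho a ++ map (addn (bm (bdom a))) (behead (brho b))) (bbe a ++ bbe b).

Definition box : cat2 :=
  @Cat2 (Ob C * Ob D)%type (bmor C D) (bcel C D) bokM bokC bsrc btgt
        (@bdom C D) (@bcod C D) bid1 bcomp1 bid2 bvcomp bhcomp.

End Box.

(* lunit x : 1_{Fx} => F(1_x);  lcmp g f : Fg ∘ Ff => F(g ∘ f) *)
Record lax (X Y : cat2) := Lax {
  lobj : Ob X -> Ob Y; lmor : Mor X -> Mor Y; lcel : Cel X -> Cel Y;
  lunit : Ob X -> Cel Y; lcmp : Mor X -> Mor X -> Cel Y }.

Record is_lax (X Y : cat2) (F : lax X Y) : Prop := IsLax {
  l_mor : forall f : Mor X, okM f ->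
    [/\ okM (lmor F f), src (lmor F f) = lobj F (src f) & tgt (lmor F f) = lobj F (tgt f)];
  l_cel : forall a : Cel X, okC a ->
    [/\ okC (lcel F a), dom (lcel F a) = lmor F (dom a) & cod (lcel F a) = lmor F (cod a)];
  l_id2 : forall f : Mor X, okM f -> lcel F (id2 f) = id2 (lmor F f);
  l_vcomp : forall a b : Cel X, okC a -> okC b -> cod a = dom b ->
    lcel F (vcomp b a) = vcomp (lcel F b) (lcel F a);
  l_unit : forall x : Ob X,
    [/\ okC (lunit F x), dom (lunit F x) = id1 (lobj F x)
      & cod (lunit F x) = lmor F (id1 x)];
  l_cmp : forall f g : Mor X, okM f -> okM g -> tgt f = src g ->
    [/\ okC (lcmp F g f), dom (lcmp F g f) = comp1 (lmor F g) (lmor F f)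
      & cod (lcmp F g f) = lmor F (comp1 g f)];
  l_nat : forall a b : Cel X, okC a -> okC b -> tgt (dom a) = src (dom b) ->
    vcomp (lcel F (hcomp b a)) (lcmp F (dom b) (dom a))
    = vcomp (lcmp F (cod b) (cod a)) (hcomp (lcel F b) (lcel F a));
  l_assoc : forall f g h : Mor X, okM f -> okM g -> okM h ->
    tgt f = src g -> tgt g = src h ->
    vcomp (lcmp F h (comp1 g f)) (hcomp (id2 (lmor F h)) (lcmp F g f))
    = vcomp (lcmp F (comp1 h g) f) (hcomp (lcmp F h g) (id2 (lmor F f)));
  l_unitl : forall f : Mor X, okM f ->
    vcomp (lcmp F (id1 (tgt f)) f) (hcomp (lunit F (tgt f)) (id2 (lmor F f)))
    = id2 (lmor F f);
  l_unitr : forall f : Mor X, okM f ->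
    vcomp (lcmp F f (id1 (src f))) (hcomp (id2 (lmor F f)) (lunit F (src f)))
    = id2 (lmor F f) }.

Definition is_strict (X Y : cat2) (F : lax X Y) : Prop :=
  [/\ is_lax F,
      (forall x : Ob X, lmor F (id1 x) = id1 (lobj F x)),
      (forall f g : Mor X, okM f -> okM g -> tgt f = src g ->
         lmor F (comp1 g f) = comp1 (lmor F g) (lmor F f)),
      (forall x : Ob X, lunit F x = id2 (id1 (lobj F x)))
    & (forall f g : Mor X, okM f -> okM g -> tgt f = src g ->
         lcmp F g f = id2 (comp1 (lmor F g) (lmor F f)))].

Definition lax_id (X : cat2) : lax X X :=
  @Lax X X id id id (fun x => id2 (id1 x)) (fun g f => id2 (comp1 g f)).

Definition lax_comp (X Y Z : cat2) (G : lax Y Z) (F : lax X Y) : lax X Z :=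
  @Lax X Z (fun x => lobj G (lobj F x)) (fun f => lmor G (lmor F f))
    (fun a => lcel G (lcel F a))
    (fun x => vcomp (lcel G (lunit F x)) (lunit G (lobj F x)))
    (fun g f => vcomp (lcel G (lcmp F g f)) (lcmp G (lmor F g) (lmor F f))).

Definition lax_eq (X Y : cat2) (F G : lax X Y) : Prop :=
  [/\ (forall x : Ob X, lobj F x = lobj G x),
      (forall f : Mor X, okM f -> lmor F f = lmor G f),
      (forall a : Cel X, okC a -> lcel F a = lcel G a),
      (forall x : Ob X, lunit F x = lunit G x)
    & (forall f g : Mor X, okM f -> okM g -> tgt f = src g -> lcmp F g f = lcmp G g f)].

Definition is_icon (X Y : cat2) (F G : lax X Y) (theta : Mor X -> Cel Y) : Prop :=
  [/\ (forall x : Ob X, lobj F x = lobj G x),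
      (forall f : Mor X, okM f ->
         [/\ okC (theta f), dom (theta f) = lmor F f & cod (theta f) = lmor G f]),
      (forall a : Cel X, okC a ->
         vcomp (lcel G a) (theta (dom a)) = vcomp (theta (cod a)) (lcel F a)),
      (forall x : Ob X, vcomp (theta (id1 x)) (lunit F x) = lunit G x)
    & (forall f g : Mor X, okM f -> okM g -> tgt f = src g ->
         vcomp (theta (comp1 g f)) (lcmp F g f)
         = vcomp (lcmp G g f) (hcomp (theta g) (theta f)))].

Definition icon_id (X Y : cat2) (F : lax X Y) : Mor X -> Cel Y := fun f => id2 (lmor F f).
Definition icon_vcomp (X Y : cat2) (th' th : Mor X -> Cel Y) : Mor X -> Cel Y :=
  fun f => vcomp (th' f) (th f).
Definition icon_whiskL (X Y Z : cat2) (H : lax Y Z) (th : Mor X -> Cel Y) : Mor X -> Cel Z :=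
  fun f => lcel H (th f).
Definition icon_whiskR (W X Y : cat2) (th : Mor X -> Cel Y) (K : lax W X) : Mor W -> Cel Y :=
  fun f => th (lmor K f).

Section LR.
Variables C D : cat2.

Definition Lmor (f : bmor C D) : Mor C * Mor D :=
  (mlist (pstart (bp f)) (parr (bp f)), mlist (pstart (bq f)) (parr (bq f))).

Definition Lfun : lax (box C D) (prod2 C D) :=
  @Lax (box C D) (prod2 C D) id Lmor
    (fun a => (hlist (pstart (bp (bdom a))) (bal a), hlist (pstart (bq (bdom a))) (bbe a)))
    (fun x => (id2 (id1 x.1), id2 (id1 x.2)))
    (fun g f => (id2 (comp1 (Lmor g).1 (Lmor f).1), id2 (comp1 (Lmor g).2 (Lmor f).2))).

(* R(c,d) = "first d, then c" *)
Definition Rmor (x : Mor C * Mor D) : bmor C D :=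
  BMor 1 (Path (src x.1) [:: x.1]) [:: 0; 0; 1] 1 (Path (src x.2) [:: x.2]) [:: 0; 1; 1].

Definition Rfun : lax (prod2 C D) (box C D) :=
  @Lax (prod2 C D) (box C D) id Rmor
    (fun a => BCel (Rmor (dom a.1, dom a.2)) (Rmor (cod a.1, cod a.2))
                   [:: 0; 1] [:: a.1] [:: 0; 1] [:: a.2])
    (fun x => BCel (bid1 x) (Rmor (id1 x.1, id1 x.2))
                   [:: 0; 0] [:: id2 (id1 x.1)] [:: 0; 0] [:: id2 (id1 x.2)])
    (fun g f => BCel (bcomp1 (Rmor g) (Rmor f)) (Rmor (comp1 g.1 f.1, comp1 g.2 f.2))
                     [:: 0; 2] [:: id2 (comp1 g.1 f.1)] [:: 0; 2] [:: id2 (comp1 g.2 f.2)]).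

Definition eta (f : Mor (box C D)) : Cel (box C D) :=
  BCel f (Rmor (Lmor f)) [:: 0; bn f] [:: id2 (Lmor f).1] [:: 0; bm f] [:: id2 (Lmor f).2].

Definition eps : Mor (prod2 C D) -> Cel (prod2 C D) := icon_id (lax_id (prod2 C D)).

End LR.

From Pilot Require Import Defs.
From mathcomp Require Import all_boot.
Set Implicit Arguments. Unset Strict Implicit. Unset Printing Implicit Defensive.

(* L is a strict 2-functor:
   composites of composites are composites (generalized associativity), and L respects
   vertical composition by the interchange law, applied to the slices of the first icon cut
   out by the second one.  For R the key observation is that a 2-cell f => R(c,d) is the
   same as a pair of 2-cells L f => (c,d), because the shuffle condition is automatic when
   the target runs through its D-component first; this gives the structure 2-cells of R and
   the components of eta at once.  Finally L R = 1 on the nose, so the counit is an identity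
   and both triangle identities reduce to 1 * 1 = 1. *)

Lemma take_slice (T : Type) (l : seq T) a b : a <= b -> take b l = take a l ++ slice l a b.
Proof. by move=> ab; rewrite /slice -{1}(subnKC ab) takeD. Qed.

Lemma dmap_homo xi a b i j : dmap xi a b -> i <= j -> j <= a -> nth 0 xi i <= nth 0 xi j.
Proof.
case=> _ _ _ mono ij ja; elim: j ij ja => [|j IH] ij ja; first by case: i ij.
rewrite leq_eqVlt in ij; case/orP: ij => [/eqP -> //|ij].
exact: leq_trans (IH ij (ltnW ja)) (mono _ ja).
Qed.

Record is_cat1 (X : cat2) : Prop := IsCat1 {
  c1_id1 : forall x : Ob X, [/\ okM (id1 x), src (id1 x) = x & tgt (id1 x) = x];
  c1_comp1 : forall f g : Mor X, okM f -> okM g -> tgt f = src g ->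
    [/\ okM (comp1 g f), src (comp1 g f) = src f & tgt (comp1 g f) = tgt g];
  c1_idl : forall f : Mor X, okM f -> comp1 (id1 (tgt f)) f = f;
  c1_idr : forall f : Mor X, okM f -> comp1 f (id1 (src f)) = f;
  c1_assoc : forall f g h : Mor X, okM f -> okM g -> okM h ->
    tgt f = src g -> tgt g = src h ->
    comp1 h (comp1 g f) = comp1 (comp1 h g) f }.

Lemma is_2cat_cat1 (X : cat2) : is_2cat X -> is_cat1 X.
Proof. by case=> *; split. Qed.

(* The category of objects and 2-cells of [X] under horizontal composition;
   the 2-cells of [hcat X] are dummies. *)
Definition hcat (X : cat2) : cat2 :=
  @Cat2 (Ob X) (Cel X) (Cel X) (@okC X) (fun _ => False)
    (fun a => src (dom a)) (fun a => tgt (dom a)) id id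
    (fun x => id2 (id1 x)) (@hcomp X) id (fun b _ => b) (fun b _ => b).

Lemma hcat_cat1 (X : cat2) : is_2cat X -> is_cat1 (hcat X).
Proof.
move=> hX; split => /=.
- move=> x; have [o s t] := c_id1 hX x; have [o2 -> _] := c_id2 hX o; by split.
- move=> a b oa ob e; have [o -> _] := c_hcomp hX oa ob e.
  have [oa1 _ _ _] := c_cell hX oa; have [ob1 _ _ _] := c_cell hX ob.
  by have [_ -> ->] := c_comp1 hX oa1 ob1 e.
- exact: c_hidl.
- exact: c_hidr.
- exact: c_hassoc.
Qed.

Section Composites.
Variable X : cat2.
Hypothesis hX : is_cat1 X.

Definition chain_end (x : Ob X) (l : seq (Mor X)) : Ob X := foldl (fun _ f => tgt f) x l.

Lemma chain_end_cat x l1 l2 : chain_end x (l1 ++ l2) = chain_end (chain_end x l1) l2.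
Proof. exact: foldl_cat. Qed.

Lemma chain_cat x l1 l2 : chain x (l1 ++ l2) <-> chain x l1 /\ chain (chain_end x l1) l2.
Proof.
elim: l1 x => [|f l IH] x /=; first by split => [|[]].
split; first by case=> ok s /IH [c1 c2].
by case=> [[ok s c1] c2]; split => //; apply/IH.
Qed.

Lemma chain_take (x : Ob X) (l : seq (Mor X)) j : chain x l -> chain x (take j l).
Proof. by rewrite -{1}(cat_take_drop j l) => /chain_cat []. Qed.

Lemma foldl_comp_typ l (acc : Mor X) : okM acc -> chain (tgt acc) l ->
  [/\ okM (foldl (fun acc g => comp1 g acc) acc l),
      src (foldl (fun acc g => comp1 g acc) acc l) = src acc
    & tgt (foldl (fun acc g => comp1 g acc) acc l) = chain_end (tgt acc) l].
Proof.
elim: l acc => [|g l IH] acc okacc //= [okg sg cl].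
have [o s t] := c1_comp1 hX okacc okg (esym sg).
by have [] := IH _ o (eq_ind_r (fun y : Ob X => chain y l) cl t); rewrite s t.
Qed.

Lemma mlist_typ (x : Ob X) (l : seq (Mor X)) : chain x l ->
  [/\ okM (mlist x l), src (mlist x l) = x & tgt (mlist x l) = chain_end x l].
Proof.
case: l => [_|f l [okf sf cl]] /=; first exact: c1_id1.
by have [] := foldl_comp_typ okf cl; rewrite sf.
Qed.

Lemma foldl_comp l (acc : Mor X) : okM acc -> chain (tgt acc) l ->
  foldl (fun acc g => comp1 g acc) acc l = comp1 (mlist (tgt acc) l) acc.
Proof.
elim: l acc => [|g l IH] acc okacc /=; first by rewrite (c1_idl hX okacc).
case=> okg sg cl; have [o s t] := c1_comp1 hX okacc okg (esym sg).
have [o1 s1 _] := mlist_typ cl.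
by rewrite IH ?t // IH // (c1_assoc hX okacc okg o1 (esym sg) (esym s1)).
Qed.

Lemma mlist_cons (x : Ob X) (f : Mor X) l :
  chain x (f :: l) -> mlist x (f :: l) = comp1 (mlist (tgt f) l) f.
Proof. by case=> okf _ cl; apply: foldl_comp. Qed.

Lemma mlist_cat (x : Ob X) (l1 l2 : seq (Mor X)) : chain x (l1 ++ l2) ->
  mlist x (l1 ++ l2) = comp1 (mlist (chain_end x l1) l2) (mlist x l1).
Proof.
case/chain_cat; case: l1 => [_ /= c2|f l1 [okf sf cl1] c2] /=.
  by have [o s _] := mlist_typ c2; rewrite -{3}s (c1_idr hX o).
rewrite foldl_cat; have [o _ t] := foldl_comp_typ okf cl1.
by rewrite foldl_comp // t.
Qed.

Lemma chain_slice (x : Ob X) (l : seq (Mor X)) a b : chain x l -> a <= b ->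
  chain (chain_end x (take a l)) (slice l a b) /\
  chain_end (chain_end x (take a l)) (slice l a b) = chain_end x (take b l).
Proof.
move=> cl ab; have := chain_take b cl; rewrite (take_slice l ab).
by case/chain_cat; rewrite chain_end_cat.
Qed.

(* Generalized associativity: [xi] cuts [l] into [k] consecutive pieces. *)
Lemma mlist_slices (x : Ob X) (l : seq (Mor X)) xi k : chain x l -> dmap xi k (size l) ->
  let piece i := mlist (chain_end x (take (nth 0 xi i) l))
                       (slice l (nth 0 xi i) (nth 0 xi i.+1)) in
  chain x [seq piece i | i <- iota 0 k] /\ mlist x [seq piece i | i <- iota 0 k] = mlist x l.
Proof.
move=> cl dm piece.
suff: forall k', k' <= k -> [/\ chain x [seq piece i | i <- iota 0 k'],
    chain_end x [seq piece i | i <- iota 0 k'] = chain_end x (take (nth 0 xi k') l)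
  & mlist x [seq piece i | i <- iota 0 k'] = mlist x (take (nth 0 xi k') l)].
  by case/(_ k (leqnn k)) => c _ ->; split => //; case: dm => _ _ -> _; rewrite take_size.
elim=> [|k' IH] lk; first by case: dm => _ -> _ _; rewrite take0; split.
have [c1 e1 m1] := IH (ltnW lk).
have le := dmap_homo dm (leqnSn k') lk.
have [cs es] := chain_slice cl le.
have [o s t] := mlist_typ cs.
have cc : chain x ([seq piece i | i <- iota 0 k'] ++ [:: piece k']).
  by apply/chain_cat; split => //=; rewrite e1.
rewrite -addn1 iotaD map_cat add0n addn1; split => //.
  by rewrite chain_end_cat e1 /= /piece t es.
rewrite mlist_cat // e1 m1 /= (take_slice l le) mlist_cat //.
by rewrite -(take_slice l le); apply: chain_take.
Qed.

End Composites.

Lemma map_zip_mapr (A B B' R : Type) (f : A -> B' -> R) (g : B -> B') s t :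
  [seq f c.1 (g c.2) | c <- zip s t] = [seq f c.1 c.2 | c <- zip s (map g t)].
Proof. by elim: s t => [|a s IH] [|b t] //=; rewrite IH. Qed.

Lemma onth_iota m n i : onth (iota m n) i = if i < n then Some (m + i) else None.
Proof.
elim: n m i => [|n IH] m [|i] //=; first by rewrite addn0.
by rewrite IH ltnS addSnnS.
Qed.

Definition is_path_icon (X : cat2) (p : Defs.path X) n (pb : Defs.path X) nb xi
    (al : seq (Cel X)) :=
  [/\ path_ok p n, path_ok pb nb, dmap xi nb n, icon_ok p xi pb nb al & pstart pb = pstart p].

Section TwoCategory.
Variable X : cat2.
Hypothesis hX : is_2cat X.

Local Notation hchain := (@chain (hcat X)).
Let hX1 := is_2cat_cat1 hX.
Let hXh := hcat_cat1 hX.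

Lemma vcomp_id2 (f : Mor X) : okM f -> vcomp (id2 f) (id2 f) = id2 f.
Proof. by move=> okf; have [o _ c] := c_id2 hX okf; have := c_vidl hX o; rewrite c. Qed.

Lemma hchain_end (x : Ob X) (l : seq (Cel X)) :
  @chain_end (hcat X) x l = chain_end x (map (@dom X) l).
Proof. by elim: l x => //= a l IH x; rewrite IH. Qed.

Lemma hlist_cons (x : Ob X) (a : Cel X) (l : seq (Cel X)) : hchain x (a :: l) ->
  hlist x (a :: l) = hcomp (hlist (tgt (dom a)) l) a.
Proof. exact: mlist_cons hXh x a l. Qed.

Lemma hlist_cat (x : Ob X) (l1 l2 : seq (Cel X)) : hchain x (l1 ++ l2) ->
  hlist x (l1 ++ l2) = hcomp (hlist (chain_end x (map (@dom X) l1)) l2) (hlist x l1).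
Proof. by rewrite -hchain_end; exact: mlist_cat hXh x l1 l2. Qed.

Lemma hchain_dom (x : Ob X) (l : seq (Cel X)) : hchain x l -> chain x (map (@dom X) l).
Proof.
elim: l x => [|a l IH] x //= [oa sa cl].
by have [? ? ? ?] := c_cell hX oa; split => //; apply: IH.
Qed.

Lemma hchain_cod (x : Ob X) (l : seq (Cel X)) : hchain x l ->
  chain x (map (@cod X) l) /\ chain_end x (map (@cod X) l) = chain_end x (map (@dom X) l).
Proof.
elim: l x => [|a l IH] x //= [oa sa cl]; have [_ oc s t] := c_cell hX oa.
by have [c e] := IH _ cl; rewrite -s -t.
Qed.

Lemma hchain_of_dom (x : Ob X) (l : seq (Cel X)) :
  (forall i a, onth l i = Some a -> okC a) -> chain x (map (@dom X) l) -> hchain x l.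
Proof.
elim: l x => [|a l IH] x //= ok [_ sa cl]; split => //; first exact: (ok 0).
by apply: IH => // i; apply: (ok i.+1).
Qed.

Lemma hlist_typ (x : Ob X) (l : seq (Cel X)) : hchain x l ->
  [/\ okC (hlist x l), dom (hlist x l) = mlist x (map (@dom X) l)
    & cod (hlist x l) = mlist x (map (@cod X) l)].
Proof.
elim: l x => [|a l IH] x cl.
  by have [o _ _] := c_id1 hX x; apply: c_id2.
have [cd _] := hchain_cod cl; have cdom := hchain_dom cl.
case: (cl) => oa sa cl'; have [_ _ _ t] := c_cell hX oa.
have [o d c] := IH _ cl'; have [_ s _] := mlist_typ hXh cl'.
rewrite (hlist_cons cl) (mlist_cons hX1 cdom) (mlist_cons hX1 cd) /= -t -c -d.
exact: c_hcomp.
Qed.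

Lemma hchain_id2 (x : Ob X) (l : seq (Mor X)) : chain x l -> hchain x (map (@id2 X) l).
Proof.
elim: l x => [|f l IH] x //= [okf sf cl].
by have [o -> _] := c_id2 hX okf; split => //; apply: IH.
Qed.

Lemma hlist_id2 (x : Ob X) (l : seq (Mor X)) : chain x l ->
  hlist x (map (@id2 X) l) = id2 (mlist x l).
Proof.
elim: l x => [|f l IH] x cl //; have hcl := hchain_id2 cl.
case: (cl) => okf sf cl'; have [_ d _] := c_id2 hX okf.
have [o s _] := mlist_typ hX1 cl'.
by rewrite (hlist_cons hcl) (mlist_cons hX1 cl) /= d IH // c_hid2.
Qed.

Lemma hchain_vcomp (x : Ob X) (al bl : seq (Cel X)) :
  hchain x al -> hchain x bl -> map (@cod X) al = map (@dom X) bl ->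
  hchain x [seq vcomp c.1 c.2 | c <- zip bl al].
Proof.
elim: al bl x => [|a al IH] [|b bl] x //= [oa sa cla] [ob sb clb] [e es].
have [o -> _] := c_vcomp hX oa ob e; split => //; apply: IH => //.
by have [_ _ _ t] := c_cell hX oa; rewrite t e.
Qed.

Lemma hlist_vcomp (x : Ob X) (al bl : seq (Cel X)) :
  hchain x al -> hchain x bl -> map (@cod X) al = map (@dom X) bl ->
  hlist x [seq vcomp c.1 c.2 | c <- zip bl al] = vcomp (hlist x bl) (hlist x al).
Proof.
elim: al bl x => [|a al IH] [|b bl] x cla clb E //.
  by have [o _ _] := c_id1 hX x; rewrite /= vcomp_id2.
all: case: E => // e es.
have cl := hchain_vcomp cla clb (f_equal2 cons e es).
have [oa sa cla'] : [/\ okC a, src (dom a) = x & hchain (tgt (dom a)) al] := cla.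
have [ob sb clb'] : [/\ okC b, src (dom b) = x & hchain (tgt (dom b)) bl] := clb.
have [_ _ _ t] := c_cell hX oa; rewrite -e -t in clb'.
have [ov dv _] := c_vcomp hX oa ob e.
rewrite [X in hlist _ X]/= (hlist_cons cl) (hlist_cons cla) (hlist_cons clb) dv -e -t IH //.
have [oh1 dh1 ch1] := hlist_typ cla'; have [oh2 dh2 ch2] := hlist_typ clb'.
have [_ sh1 _] := mlist_typ hX1 (hchain_dom cla').
by apply: c_interchange => //; rewrite ?ch1 ?dh2 ?es // dh1 sh1.
Qed.

Lemma id2_assoc (f g h : Mor X) : okM f -> okM g -> okM h -> tgt f = src g -> tgt g = src h ->
  vcomp (id2 (comp1 h (comp1 g f))) (hcomp (id2 h) (id2 (comp1 g f)))
  = vcomp (id2 (comp1 (comp1 h g) f)) (hcomp (id2 (comp1 h g)) (id2 f)).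
Proof.
move=> okf okg okh fg gh.
have [ogf _ tgf] := c_comp1 hX okf okg fg; have [ohg shg _] := c_comp1 hX okg okh gh.
have [ohgf _ _] := c_comp1 hX ogf okh (etrans tgf gh).
rewrite c_hid2 ?tgf // c_hid2 ?shg // (c_assoc hX okf okg okh fg gh).
by rewrite -(c_assoc hX okf okg okh fg gh) vcomp_id2.
Qed.

Lemma id2_unitl (f : Mor X) : okM f ->
  vcomp (id2 (comp1 (id1 (tgt f)) f)) (hcomp (id2 (id1 (tgt f))) (id2 f)) = id2 f.
Proof.
move=> okf; have [o s _] := c_id1 hX (tgt f).
by rewrite c_hid2 // (c_idl hX okf) vcomp_id2.
Qed.

Lemma id2_unitr (f : Mor X) : okM f ->
  vcomp (id2 (comp1 f (id1 (src f)))) (hcomp (id2 f) (id2 (id1 (src f)))) = id2 f.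
Proof.
move=> okf; have [o _ t] := c_id1 hX (src f).
by rewrite c_hid2 // (c_idr hX okf) vcomp_id2.
Qed.

Lemma mlist_path_typ (p : Defs.path X) n : path_ok p n ->
  [/\ okM (mlist (pstart p) (parr p)), src (mlist (pstart p) (parr p)) = pstart p
    & tgt (mlist (pstart p) (parr p)) = pobj p n].
Proof. by case=> <- cl; rewrite /pobj take_size; apply: mlist_typ. Qed.

Lemma mlist_path_cat (p q : Defs.path X) n m :
  path_ok p n -> path_ok q m -> pobj p n = pstart q ->
  chain (pstart p) (parr p ++ parr q) /\
  mlist (pstart p) (parr p ++ parr q)
  = comp1 (mlist (pstart q) (parr q)) (mlist (pstart p) (parr p)).
Proof.
move=> [szp clp] [_ clq] e.
have {}e : chain_end (pstart p) (parr p) = pstart q by rewrite -e /pobj -szp take_size.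
have cl : chain (pstart p) (parr p ++ parr q) by apply/chain_cat; rewrite e.
by rewrite mlist_cat // e.
Qed.

Lemma path_icon_cells (p pb : Defs.path X) n nb xi al : is_path_icon p n pb nb xi al ->
  [/\ forall i a, onth al i = Some a -> okC a,
      map (@cod X) al = parr pb
    & map (@dom X) al = [seq seg p (nth 0 xi i) (nth 0 xi i.+1) | i <- iota 0 nb]].
Proof.
case=> _ [szb _] _ [sz cell] _.
have pb_at i a : onth al i = Some a -> exists f, onth (parr pb) i = Some f.
  move=> h; have : i < size (parr pb) by rewrite szb -sz -onthTE h.
  by rewrite -onthTE; case: onth => // f _; exists f.
split.
- by move=> i a h; have [f /(cell _ _ _ h) []] := pb_at i a h.
- apply: eq_from_onth => i; rewrite onth_map; case h: (onth al i) => [a|] /=.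
    by have [f hf] := pb_at i a h; have [_ _ ->] := cell _ _ _ h hf.
  by rewrite onth_default // szb -sz -onthNE h.
- apply: eq_from_onth => i; rewrite !onth_map onth_iota; case h: (onth al i) => [a|] /=.
    have [f hf] := pb_at i a h; have [_ -> _] := cell _ _ _ h hf.
    by rewrite -sz -onthTE h.
  by rewrite ltnNge -sz -onthNE h.
Qed.

Lemma path_icon_hchain (p pb : Defs.path X) n nb xi al : is_path_icon p n pb nb xi al ->
  [/\ hchain (pstart p) al, chain_end (pstart p) (map (@dom X) al) = pobj p n
    & mlist (pstart p) (map (@dom X) al) = mlist (pstart p) (parr p)].
Proof.
move=> pic; have [okal _ mdom] := path_icon_cells pic.
case: pic => [[szp clp] _ dm _ _]; rewrite -szp in dm.
have [cl ml] := mlist_slices hX1 clp dm; rewrite -mdom in cl ml.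
have [_ _ t] := mlist_typ hX1 cl.
split => //; first exact: hchain_of_dom.
by rewrite -t ml; have [_ _ ->] := mlist_typ hX1 clp; rewrite /pobj -szp take_size.
Qed.

Lemma hlist_path_icon (p pb : Defs.path X) n nb xi al : is_path_icon p n pb nb xi al ->
  [/\ okC (hlist (pstart p) al), dom (hlist (pstart p) al) = mlist (pstart p) (parr p)
    & cod (hlist (pstart p) al) = mlist (pstart pb) (parr pb)].
Proof.
move=> pic; have [_ mcod _] := path_icon_cells pic.
have [cl _ mdom] := path_icon_hchain pic; have [o -> ->] := hlist_typ cl.
by case: pic => _ _ _ _ ->; rewrite mcod.
Qed.

Lemma hlist_path_icon_cat (p pb q qb : Defs.path X) n nb m mb xi xj al bl :
  is_path_icon p n pb nb xi al -> is_path_icon q m qb mb xj bl -> pobj p n = pstart q ->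
  hlist (pstart p) (al ++ bl) = hcomp (hlist (pstart q) bl) (hlist (pstart p) al).
Proof.
move=> pica picb e; have [cla ea _] := path_icon_hchain pica.
have [clb _ _] := path_icon_hchain picb.
have cl : hchain (pstart p) (al ++ bl) by apply/chain_cat; rewrite hchain_end ea e.
by rewrite hlist_cat // ea e.
Qed.

Lemma hlist_path_icon_vcomp (pa pm pb : Defs.path X) na nm nb xa xb al bl :
  is_path_icon pa na pm nm xa al -> is_path_icon pm nm pb nb xb bl ->
  hlist (pstart pa) (vcomp_icon al pm xb bl)
  = vcomp (hlist (pstart pm) bl) (hlist (pstart pa) al).
Proof.
move=> pica picb; have [cla _ _] := path_icon_hchain pica.
have [clb _ _] := path_icon_hchain picb; have [_ _ mdomb] := path_icon_cells picb.
have [_ mcoda _] := path_icon_cells pica.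
case: pica => _ _ _ [sza _] e; case: picb => _ _ dm [szb _] _; rewrite -sza in dm.
rewrite e in clb *; set x := pstart pa.
have pobj_pm j : pobj pm j = @chain_end (hcat X) x (take j al).
  change (pobj pm j) with (chain_end (pstart pm) (take j (parr pm))).
  rewrite e -mcoda -map_take hchain_end.
  by have [_ ->] := hchain_cod (chain_take j cla).
(* [G i] composes the slice of [al] lying over the [i]-th component of [bl]. *)
set G := fun i => hlist (pobj pm (nth 0 xb i)) (slice al (nth 0 xb i) (nth 0 xb i.+1)).
have [clG hG] := mlist_slices hXh cla dm.
rewrite /vcomp_icon (map_zip_mapr (@vcomp X) G) szb.
have -> : map G (iota 0 nb)
    = [seq @mlist (hcat X) (@chain_end (hcat X) x (take (nth 0 xb i) al))
           (slice al (nth 0 xb i) (nth 0 xb i.+1)) | i <- iota 0 nb].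
  by apply: eq_map => i; rewrite /G pobj_pm.
rewrite hlist_vcomp //; first by congr (vcomp _ _); exact: hG.
rewrite mdomb -map_comp; apply/eq_in_map => i; rewrite mem_iota => /= lti.
have [cs _] := chain_slice cla (dmap_homo dm (leqnSn i) lti).
have [_ _ ->] := hlist_typ cs.
by rewrite /seg pobj_pm /slice map_take map_drop mcoda.
Qed.

Lemma icon_ok_single (p : Defs.path X) n y (a : Cel X) : path_ok p n -> okC a ->
  dom a = mlist (pstart p) (parr p) -> icon_ok p [:: 0; n] (Path y [:: cod a]) 1 [:: a].
Proof.
move=> [szp _] oa da; split => // -[|i] b g //=; last by rewrite onth0n.
by case=> <- [<-]; rewrite /seg /pobj /slice take0 drop0 subn0 -szp take_size.
Qed.

End TwoCategory.

Lemma prod2_2cat (C D : cat2) : is_2cat C -> is_2cat D -> is_2cat (prod2 C D).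
Proof.
move=> hC hD; split => /=.
- move=> [x y] /=.
  by have [? -> ->] := c_id1 hC x; have [? -> ->] := c_id1 hD y.
- move=> [f1 f2] [g1 g2] [o1 o2] [o3 o4] [e1 e2] /=.
  by have [? -> ->] := c_comp1 hC o1 o3 e1; have [? -> ->] := c_comp1 hD o2 o4 e2.
- by move=> [f1 f2] [o1 o2] /=; rewrite !c_idl.
- by move=> [f1 f2] [o1 o2] /=; rewrite !c_idr.
- by move=> [? ?] [? ?] [? ?] [? ?] [? ?] [? ?] [? ?] [? ?] /=; rewrite !c_assoc.
- move=> [a1 a2] [o1 o2] /=.
  by have [? ? -> ->] := c_cell hC o1; have [? ? -> ->] := c_cell hD o2.
- move=> [f1 f2] [o1 o2] /=.
  by have [? -> ->] := c_id2 hC o1; have [? -> ->] := c_id2 hD o2.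
- move=> [a1 a2] [b1 b2] [o1 o2] [o3 o4] [e1 e2] /=.
  by have [? -> ->] := c_vcomp hC o1 o3 e1; have [? -> ->] := c_vcomp hD o2 o4 e2.
- by move=> [a1 a2] [o1 o2] /=; rewrite !c_vidl.
- by move=> [a1 a2] [o1 o2] /=; rewrite !c_vidr.
- by move=> [? ?] [? ?] [? ?] [? ?] [? ?] [? ?] [? ?] [? ?] /=; rewrite !c_vassoc.
- move=> [a1 a2] [b1 b2] [o1 o2] [o3 o4] [e1 e2] /=.
  by have [? -> ->] := c_hcomp hC o1 o3 e1; have [? -> ->] := c_hcomp hD o2 o4 e2.
- by move=> [a1 a2] [o1 o2] /=; rewrite !c_hidl.
- by move=> [a1 a2] [o1 o2] /=; rewrite !c_hidr.
- by move=> [? ?] [? ?] [? ?] [? ?] [? ?] [? ?] [? ?] [? ?] /=; rewrite !c_hassoc.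
- by move=> [? ?] [? ?] [? ?] [? ?] [? ?] /=; rewrite !c_hid2.
- by move=> [? ?] [? ?] [? ?] [? ?] [? ?] [? ?] [? ?] [? ?] [? ?] [? ?] [? ?] /=;
    rewrite !c_interchange.
Qed.

Section StrictFunctors.
Variables X Y : cat2.
Hypothesis hY : is_2cat Y.

Lemma is_strict_of_2functor (F : lax X Y) :
  (forall a : Cel X, okC a -> [/\ okM (dom a), okM (cod a), src (dom a) = src (cod a)
                                & tgt (dom a) = tgt (cod a)]) ->
  (forall f : Mor X, okM f -> [/\ okM (lmor F f), src (lmor F f) = lobj F (src f)
                                & tgt (lmor F f) = lobj F (tgt f)]) ->
  (forall a : Cel X, okC a -> [/\ okC (lcel F a), dom (lcel F a) = lmor F (dom a)
                                & cod (lcel F a) = lmor F (cod a)]) ->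
  (forall f : Mor X, okM f -> lcel F (id2 f) = id2 (lmor F f)) ->
  (forall a b : Cel X, okC a -> okC b -> cod a = dom b ->
     lcel F (vcomp b a) = vcomp (lcel F b) (lcel F a)) ->
  (forall a b : Cel X, okC a -> okC b -> tgt (dom a) = src (dom b) ->
     lcel F (hcomp b a) = hcomp (lcel F b) (lcel F a)) ->
  (forall x : Ob X, lmor F (id1 x) = id1 (lobj F x)) ->
  (forall f g : Mor X, okM f -> okM g -> tgt f = src g ->
     lmor F (comp1 g f) = comp1 (lmor F g) (lmor F f)) ->
  (forall x : Ob X, lunit F x = id2 (id1 (lobj F x))) ->
  (forall f g : Mor X, lcmp F g f = id2 (comp1 (lmor F g) (lmor F f))) ->
  is_strict F.
Proof.
move=> Xcell Fmor Fcel Fid2 Fvcomp Fhcomp Fid1 Fcomp1 Funit Fcmp.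
have Fcomp_ok f g : okM f -> okM g -> tgt f = src g ->
    okM (comp1 (lmor F g) (lmor F f)) /\ tgt (lmor F f) = src (lmor F g).
  move=> okf okg e; have [okf' _ tf] := Fmor _ okf; have [okg' sg _] := Fmor _ okg.
  have e' : tgt (lmor F f) = src (lmor F g) by rewrite tf sg e.
  by have [o _ _] := c_comp1 hY okf' okg' e'.
split => //; split => //.
- move=> x; rewrite Funit Fid1; have [o _ _] := c_id1 hY (lobj F x); exact: c_id2.
- move=> f g okf okg e; have [o _] := Fcomp_ok _ _ okf okg e.
  by rewrite Fcmp Fcomp1 //; apply: c_id2.
- move=> a b oa ob e; have [oda _ _ _] := Xcell _ oa; have [odb _ _ _] := Xcell _ ob.
  have [_ e'] := Fcomp_ok _ _ oda odb e.
  have [oa' da ca] := Fcel _ oa; have [ob' db cb] := Fcel _ ob.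
  rewrite -da -db in e'; have [o dh ch] := c_hcomp hY oa' ob' e'.
  by rewrite Fhcomp // !Fcmp -da -db -dh c_vidr // -ca -cb -ch c_vidl.
- move=> f g h okf okg okh fg gh.
  have [okf' _ _] := Fmor _ okf; have [okg' _ _] := Fmor _ okg; have [okh' _ _] := Fmor _ okh.
  have [_ e1] := Fcomp_ok _ _ okf okg fg; have [_ e2] := Fcomp_ok _ _ okg okh gh.
  rewrite !Fcmp !Fcomp1 //; exact: id2_assoc.
- move=> f okf; have [okf' _ tf] := Fmor _ okf.
  by rewrite Fcmp Funit Fid1 -tf id2_unitl.
- move=> f okf; have [okf' sf _] := Fmor _ okf.
  by rewrite Fcmp Funit Fid1 -sf id2_unitr.
Qed.

End StrictFunctors.

Lemma lax_id_strict (X : cat2) : is_2cat X -> is_strict (lax_id X).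
Proof.
by move=> hX; apply: (is_strict_of_2functor hX (F := lax_id X)) => //; apply: c_cell.
Qed.

Lemma lax_eq_icon_id (X Y : cat2) (F G : lax X Y) : is_2cat Y -> is_lax G ->
  lax_eq F G -> is_icon F G (icon_id G).
Proof.
move=> hY laxG [eobj emor ecel eunit ecmp]; rewrite /icon_id.
split => //.
- move=> f okf; have [o _ _] := l_mor laxG okf; rewrite emor //; exact: c_id2.
- move=> a oa; have [o d c] := l_cel laxG oa.
  by rewrite ecel // -d c_vidr // -c c_vidl.
- move=> x; have [o _ c] := l_unit laxG x.
  by rewrite eunit -c c_vidl.
- move=> f g okf okg e; have [o d c] := l_cmp laxG okf okg e.
  have [okf' _ tf] := l_mor laxG okf; have [okg' sg _] := l_mor laxG okg.
  by rewrite ecmp // -c c_vidl // c_hid2 ?tf ?sg ?e // -d c_vidr.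
Qed.

Lemma dmap_minpre0 r N n : dmap r N n -> minpre r 0 = 0.
Proof. by case=> sz h _ _; case: r sz h => [|a t] //= _ ->. Qed.

Lemma dmap_minpre_last r N n : dmap r N n -> minpre r n <= N.
Proof.
case=> sz _ hN _; rewrite leqNgt; apply/negP => lt.
by have := before_find 0 lt; rewrite hN /= eqxx.
Qed.

Lemma dmap_maxpre_last s N m : dmap s N m -> maxpre s m = N.
Proof.
case=> sz _ hN _; rewrite /maxpre sz /=.
have : nth 0 (rev s) 0 = m by rewrite nth_rev sz // subSS subn0.
case E: (rev s) => [|a t]; first by move: (size_rev s); rewrite E sz.
by move=> /= ->; rewrite eqxx subn0.
Qed.

Section BoxProduct.
Variables C D : cat2.
Hypotheses (hC : is_2cat C) (hD : is_2cat D).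

Let hCD := prod2_2cat hC hD.

Lemma bokC_path_icons (a : bcel C D) : bokC a ->
  is_path_icon (bp (bdom a)) (bn (bdom a)) (bp (bcod a)) (bn (bcod a)) (bxi a) (bal a) /\
  is_path_icon (bq (bdom a)) (bm (bdom a)) (bq (bcod a)) (bm (bcod a)) (brho a) (bbe a).
Proof.
by case=> [[pf qf _] [[pg qg _] [[e1 e2] [_ [dx [dr [_ [ia ib]]]]]]]]; split; split.
Qed.

Lemma Lfun_mor (f : Mor (box C D)) : okM f ->
  [/\ okM (lmor (Lfun C D) f), src (lmor (Lfun C D) f) = src f
    & tgt (lmor (Lfun C D) f) = tgt f].
Proof.
case=> pf qf _; rewrite /= /Lmor /=; have [o1 -> ->] := mlist_path_typ hC pf.
by have [o2 -> ->] := mlist_path_typ hD qf.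
Qed.

Lemma Lfun_cel (a : Cel (box C D)) : okC a ->
  [/\ okC (lcel (Lfun C D) a), dom (lcel (Lfun C D) a) = lmor (Lfun C D) (dom a)
    & cod (lcel (Lfun C D) a) = lmor (Lfun C D) (cod a)].
Proof.
move=> /bokC_path_icons [pic1 pic2] /=.
have [o1 -> ->] := hlist_path_icon hC pic1.
by have [o2 -> ->] := hlist_path_icon hD pic2.
Qed.

Lemma Lfun_comp1 (f g : Mor (box C D)) : okM f -> okM g -> tgt f = src g ->
  lmor (Lfun C D) (comp1 g f) = comp1 (lmor (Lfun C D) g) (lmor (Lfun C D) f).
Proof.
case=> pf qf _ [pg qg _] [e1 e2].
by rewrite /= /Lmor /= (mlist_path_cat hC pf pg e1).2 (mlist_path_cat hD qf qg e2).2.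
Qed.

Lemma Lfun_vcomp (a b : Cel (box C D)) : okC a -> okC b -> cod a = dom b ->
  lcel (Lfun C D) (vcomp b a) = vcomp (lcel (Lfun C D) b) (lcel (Lfun C D) a).
Proof.
move=> /bokC_path_icons [pa1 pa2] /bokC_path_icons [pb1 pb2] /= e.
rewrite -e in pb1 pb2.
by rewrite (hlist_path_icon_vcomp hC pa1 pb1) (hlist_path_icon_vcomp hD pa2 pb2) -e.
Qed.

Lemma Lfun_hcomp (a b : Cel (box C D)) : okC a -> okC b -> tgt (dom a) = src (dom b) ->
  lcel (Lfun C D) (hcomp b a) = hcomp (lcel (Lfun C D) b) (lcel (Lfun C D) a).
Proof.
move=> /bokC_path_icons [pa1 pa2] /bokC_path_icons [pb1 pb2] [e1 e2].
by rewrite /= (hlist_path_icon_cat hC pa1 pb1 e1) (hlist_path_icon_cat hD pa2 pb2 e2).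
Qed.

Lemma Lfun_strict : is_strict (Lfun C D).
Proof.
apply: (is_strict_of_2functor hCD (F := Lfun C D)) => //.
- by move=> a [? [? [? [?]]]].
- exact: Lfun_mor.
- exact: Lfun_cel.
- move=> f [pf qf _] /=.
  by rewrite !hlist_id2 //; [case: qf | case: pf].
- exact: Lfun_vcomp.
- exact: Lfun_hcomp.
- exact: Lfun_comp1.
Qed.

Lemma Rmor_ok (x : Mor (prod2 C D)) : okM x -> bokM (Rmor x).
Proof.
move=> [o1 o2]; split; try by split.
split; try by split => // [[|[|i]]].
by move=> [|[|i]] //= _; [right | left].
Qed.

Lemma Rmor_comp_ok (f g : Mor (prod2 C D)) : okM f -> okM g -> tgt f = src g ->
  bokM (bcomp1 (Rmor g) (Rmor f)).
Proof.
move=> [of1 of2] [og1 og2] [e1 e2]; split; try by split => //; split.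
split; try by split => // [[|[|[|[|i]]]]].
by move=> [|[|[|[|i]]]] // _; [right | left | right | left].
Qed.

(* A 2-cell from [f] into [R c] is the same as a pair of 2-cells [L f => c]: the shuffle
   condition holds automatically because [R c] runs through [c.2] before [c.1]. *)
Lemma bokC_into_Rmor (f : bmor C D) (c : Mor (prod2 C D)) (a1 : Cel C) (a2 : Cel D) :
  bokM f -> okC a1 -> okC a2 -> (dom a1, dom a2) = Lmor f -> (cod a1, cod a2) = c ->
  bokC (BCel f (Rmor c) [:: 0; bn f] [:: a1] [:: 0; bm f] [:: a2]).
Proof.
move=> fo oa1 oa2 [da1 da2] <-; have fo' := fo; case: fo' => pf qf [dr ds _].
have [_ o1 s1 t1] := c_cell hC oa1; have [_ o2 s2 t2] := c_cell hD oa2.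
have [_ sp tp] := mlist_path_typ hC pf; have [_ sq tq] := mlist_path_typ hD qf.
split=> //; split; first exact: Rmor_ok.
split; first by rewrite /bsrc /= -s1 -s2 da1 da2 sp sq.
split; first by rewrite /btgt /pobj /= -t1 -t2 da1 da2 tp tq.
do 2 (split; first by split => // -[|i]).
split.
  by move=> [|[|[|i]]] //= _;
    rewrite ?(dmap_minpre0 dr) ?(dmap_maxpre_last ds) ?(dmap_minpre_last dr).
by split; apply: icon_ok_single.
Qed.

Lemma Rfun_lax : is_lax (Rfun C D).
Proof.
split.
- by move=> x ox; split => //; apply: Rmor_ok.
- move=> [a1 a2] [o1 o2]; split => //.
  have [d1 _ _ _] := c_cell hC o1; have [d2 _ _ _] := c_cell hD o2.
  exact: bokC_into_Rmor (@Rmor_ok (dom a1, dom a2) (conj d1 d2)) o1 o2 erefl erefl.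
- move=> [f1 f2] [o1 o2] /=.
  by have [_ -> ->] := c_id2 hC o1; have [_ -> ->] := c_id2 hD o2.
- move=> [a1 a2] [b1 b2] [oa1 oa2] [ob1 ob2] [e1 e2] /=.
  by have [_ -> ->] := c_vcomp hC oa1 ob1 e1; have [_ -> ->] := c_vcomp hD oa2 ob2 e2.
- move=> [x1 x2]; have [o1 _ _] := c_id1 hC x1; have [o2 _ _] := c_id1 hD x2.
  have [k1 d1 c1] := c_id2 hC o1; have [k2 d2 c2] := c_id2 hD o2.
  split => //; refine (@bokC_into_Rmor (bid1 (x1, x2)) (id1 x1, id1 x2) _ _ _ k1 k2 _ _).
  + by split; split => //; split.
  + by rewrite d1 d2.
  + by rewrite c1 c2.
- move=> [f1 f2] [g1 g2] okf okg e; have [o _ _] := c_comp1 hCD okf okg e.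
  case: o => o1 o2; have [k1 d1 c1] := c_id2 hC o1; have [k2 d2 c2] := c_id2 hD o2.
  split => //; refine (@bokC_into_Rmor (bcomp1 (Rmor (g1, g2)) (Rmor (f1, f2)))
                                   (comp1 g1 f1, comp1 g2 f2) _ _ _ k1 k2 _ _).
  + exact: Rmor_comp_ok.
  + by rewrite d1 d2.
  + by rewrite c1 c2.
- move=> [a1 a2] [b1 b2] [/= oa1 oa2] [/= ob1 ob2] [/= e1 e2].
  have [oh1 dh1 ch1] := c_hcomp hC oa1 ob1 e1; have [oh2 dh2 ch2] := c_hcomp hD oa2 ob2 e2.
  have := c_vidr hC oh1; have := c_vidr hD oh2; have := c_vidl hC oh1; have := c_vidl hD oh2.
  by rewrite /= /bvcomp /vcomp_icon /= dh1 dh2 ch1 ch2 => -> -> -> ->.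
- move=> [f1 f2] [g1 g2] [h1 h2] [of1 of2] [og1 og2] [oh1 oh2] [e1 e2] [e3 e4] /=.
  rewrite /bvcomp /bhcomp /vcomp_icon /=.
  by rewrite !id2_assoc // (c_assoc hC of1 og1 oh1 e1 e3) (c_assoc hD of2 og2 oh2 e2 e4).
- move=> [f1 f2] [of1 of2] /=; rewrite /bvcomp /bhcomp /vcomp_icon /=.
  by rewrite !id2_unitl // (c_idl hC of1) (c_idl hD of2).
- move=> [f1 f2] [of1 of2] /=; rewrite /bvcomp /bhcomp /vcomp_icon /=.
  by rewrite !id2_unitr // (c_idr hC of1) (c_idr hD of2).
Qed.

Lemma eta_icon : is_icon (lax_id (box C D)) (lax_comp (Rfun C D) (Lfun C D)) (@eta C D).
Proof.
split => //.
- move=> f fo; have [o1 o2] : okM (Lmor f).1 /\ okM (Lmor f).2 by case: (Lfun_mor fo).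
  have [k1 d1 c1] := c_id2 hC o1; have [k2 d2 c2] := c_id2 hD o2.
  by split => //; apply: bokC_into_Rmor => //; rewrite ?(d1, d2, c1, c2) -surjective_pairing.
- move=> a oa /=; rewrite /bvcomp /vcomp_icon /=.
  have [pic1 pic2] := bokC_path_icons oa.
  have [o1 d1 c1] := hlist_path_icon hC pic1; have [o2 d2 c2] := hlist_path_icon hD pic2.
  case: pic1 pic2 => _ _ [_ x0 xn _] [sza _] e1 [_ _ [_ r0 rn _] [szb _] e2].
  rewrite x0 xn r0 rn /slice !subn0 !drop0 -sza -szb !take_size /Lmor -c1 -c2.
  rewrite /pobj !take0 e1 e2.
  by rewrite (c_vidl hC o1) (c_vidl hD o2) -d1 -d2 (c_vidr hC o1) (c_vidr hD o2).
- move=> [x1 x2]; rewrite /= /bvcomp /vcomp_icon /=.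
  have [o1 _ _] := c_id1 hC x1; have [o2 _ _] := c_id1 hD x2.
  by have [_ _ ->] := c_id2 hC o1; have [_ _ ->] := c_id2 hD o2.
- (* Both sides are the identity 2-cell on [R (L g o L f)]. *)
  move=> f g [pf qf _] [pg qg _] [e1 e2]; rewrite /= /bvcomp /bhcomp /vcomp_icon /=.
  have [cl1 m1] := mlist_path_cat hC pf pg e1; have [cl2 m2] := mlist_path_cat hD qf qg e2.
  have [o1 _ t1] := mlist_path_typ hC pf; have [o1' s1 _] := mlist_path_typ hC pg.
  have [o2 _ t2] := mlist_path_typ hD qf; have [o2' s2 _] := mlist_path_typ hD qg.
  rewrite e1 -s1 in t1; rewrite e2 -s2 in t2.
  have [oc1 _ _] := c_comp1 hC o1 o1' t1; have [oc2 _ _] := c_comp1 hD o2 o2' t2.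
  have [_ _ c1] := c_id2 hC oc1; have [_ _ c2] := c_id2 hD oc2.
  have [szp _] := pf; have [szp' _] := pg; have [szq _] := qf; have [szq' _] := qg.
  rewrite -[0 :: iota 1 _]/(iota 0 _.+1) -[0 :: iota 1 (bm f + bm g)]/(iota 0 _.+1).
  rewrite !nth_iota //.
  rewrite /slice !drop0 !subn0 !take_oversize ?size_map ?size_cat ?szp ?szp' ?szq ?szq' //.
  rewrite /pobj !take0 !hlist_id2 // m1 m2 !c_hid2 // c1 c2 !vcomp_id2 //.
  by rewrite /Lmor /= m1 m2.
Qed.

Lemma Lfun_Rfun_id : lax_eq (lax_comp (Lfun C D) (Rfun C D)) (lax_id (prod2 C D)).
Proof.
split => //; [by move=> [] | by move=> [] | move=> x | move=> f g okf okg e].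
- by have [o _ _] := c_id1 hCD x; apply: (vcomp_id2 hCD o).
- by have [o _ _] := c_comp1 hCD okf okg e; apply: (vcomp_id2 hCD o).
Qed.

Lemma eps_icon : is_icon (lax_comp (Lfun C D) (Rfun C D)) (lax_id (prod2 C D)) (@eps C D).
Proof.
have [laxI _ _ _ _] := lax_id_strict hCD.
exact: lax_eq_icon_id hCD laxI Lfun_Rfun_id.
Qed.

Lemma triangle_L (f : Mor (box C D)) : okM f ->
  icon_vcomp (icon_whiskR (@eps C D) (Lfun C D)) (icon_whiskL (Lfun C D) (@eta C D)) f
  = icon_id (Lfun C D) f.
Proof. by move=> /Lfun_mor [o _ _]; apply: (vcomp_id2 hCD o). Qed.

Lemma triangle_R (x : Mor (prod2 C D)) : okM x ->
  icon_vcomp (icon_whiskL (Rfun C D) (@eps C D)) (icon_whiskR (@eta C D) (Rfun C D)) x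
  = icon_id (Rfun C D) x.
Proof.
case: x => [x1 x2] [o1 o2].
rewrite /icon_vcomp /icon_whiskR /icon_whiskL /= /bvcomp /vcomp_icon /=.
have [_ _ c1] := c_id2 hC o1; have [_ _ c2] := c_id2 hD o2.
by rewrite c1 c2 !vcomp_id2.
Qed.

End BoxProduct.

Theorem mainTheorem12 (C D : cat2) (hC : is_2cat C) (hD : is_2cat D) :
  is_strict (Lfun C D) /\
  is_lax (Rfun C D) /\
  lax_eq (lax_comp (Lfun C D) (Rfun C D)) (lax_id (prod2 C D)) /\
  is_icon (lax_id (box C D)) (lax_comp (Rfun C D) (Lfun C D)) (@eta C D) /\
  is_icon (lax_comp (Lfun C D) (Rfun C D)) (lax_id (prod2 C D)) (@eps C D) /\
  (forall f : Mor (box C D), okM f ->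
     icon_vcomp (icon_whiskR (@eps C D) (Lfun C D))
                (icon_whiskL (Lfun C D) (@eta C D)) f
     = icon_id (Lfun C D) f) /\
  (forall x : Mor (prod2 C D), okM x ->
     icon_vcomp (icon_whiskL (Rfun C D) (@eps C D))
                (icon_whiskR (@eta C D) (Rfun C D)) x
     = icon_id (Rfun C D) x).
Proof.
split; first exact: Lfun_strict.
split; first exact: Rfun_lax.
split; first exact: Lfun_Rfun_id.
split; first exact: eta_icon.
split; first exact: eps_icon.
split; first exact: triangle_L.
exact: triangle_R.
Qed.
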